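(* Let $L\in\mathbf{LMO}(\Sigma)$ be a language recognized by some MON-1qfa with isolated cut-point. Then its syntactic monoid $M(L)$ is an $R$-trivial block group, i.e. $M(L)\in\mathbf{BG}\cap\mathbf{R}$.
   Context: A MON-1qfa over a finite alphabet $\Sigma$ is a tuple $A=\langle\Sigma\cup\{\#\},(O_c)_{c\in\Sigma\cup\{\#\}},\pi_0,F\rangle$, where $\pi_0\in\mathbb{C}^{1\times m}$ has norm $1$, each $O_c$ is an observable (Hermitian $m\times m$ matrix) with spectral decomposition $O_c=\sum_{r\in V(O_c)} r\,P_c(r)$ into orthogonal projectors, and $F\subseteq V(O_\#)$. For $x=x_1\cdots x_n$, with $\rho_0=\pi_0^\dagger\pi_0$ and $\rho_i=\sum_{r}P_{x_i}(r)\rho_{i-1}P_{x_i}(r)$, the acceptance probability is $p_A(x)=\sum_{r\in F}\mathrm{tr}(P_\#(r)\rho_n)$. $A$ recognizes $L$ with isolated cut-point $\lambda$ if for all $x\in\Sigma^*$, $x\in L\Leftrightarrow p_A(x)>\lambda$, and there is $\delta>0$ with $|p_A(x)-\lambda|\ge\delta$ for all $x$. $\mathbf{LMO}(\Sigma)$ is the class of languages over $\Sigma$ recognized by some MON-1qfa with isolated cut-point. $M(L)$ is the syntactic monoid of $L$. $\mathbf{BG}$ is the class of finite block groups: finite monoids in which every $R$-class and every $L$-class contains at most one idempotent. $\mathbf{R}$ is the class of $R$-trivial finite monoids ($xM=yM\Rightarrow x=y$). *)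

From HB Require Import structures.
From mathcomp Require Import all_boot all_order all_algebra.
From mathcomp Require Import reals complex.
Set Implicit Arguments. Unset Strict Implicit. Unset Printing Implicit Defensive.
Import Order.TTheory GRing.Theory Num.Theory.
Local Open Scope ring_scope.

Definition adj (R : realType) (p q : nat) (M : 'M[R[i]]_(p, q)) : 'M[R[i]]_(q, p) :=
  (map_mx (@conjc R) M)^T.

Definition cr (R : realType) (r : R) : R[i] := Complex r 0.

Definition hermitian (R : realType) (m : nat) (O : 'M[R[i]]_m) : Prop := adj O = O.

Definition orth_projector (R : realType) (m : nat) (P : 'M[R[i]]_m) : Prop :=
  P *m P = P /\ adj P = P.

(* [spectral_decomp O s] : s = [:: (r_1,P_1); ...; (r_k,P_k)] is the spectral
   decomposition  O = sum_r r P(r)  of the observable O: the r's are the pairwise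
   distinct (real) eigenvalues V(O), the P(r) are nonzero, pairwise orthogonal,
   orthogonal projectors summing to the identity. *)
Definition spectral_decomp (R : realType) (m : nat) (O : 'M[R[i]]_m)
    (s : seq (R * 'M[R[i]]_m)) : Prop :=
  [/\ uniq (map fst s),
      (forall rP, rP \in s -> orth_projector rP.2 /\ rP.2 != 0),
      pairwise (fun a b => (a.2 *m b.2 == 0) && (b.2 *m a.2 == 0)) s,
      \sum_(rP <- s) rP.2 = 1%:M
    & O = \sum_(rP <- s) cr rP.1 *: rP.2].

(* The observable O_# of the
   end-marker # is [obs_end]; [spec c] / [spec_end] are their spectral
   decompositions; [acc] is the set F of accepting values. *)
Record mon1qfa (S : finType) (R : realType) (m : nat) := Mon1qfa {
  obs : S -> 'M[R[i]]_m;
  spec : S -> seq (R * 'M[R[i]]_m);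
  obs_end : 'M[R[i]]_m;
  spec_end : seq (R * 'M[R[i]]_m);
  pi0 : 'rV[R[i]]_m;
  acc : seq R
}.

Definition mon1qfa_wf (S : finType) (R : realType) (m : nat) (A : mon1qfa S R m) : Prop :=
  [/\ (forall c, hermitian (obs A c) /\ spectral_decomp (obs A c) (spec A c)),
      hermitian (obs_end A) /\ spectral_decomp (obs_end A) (spec_end A),
      pi0 A *m adj (pi0 A) = 1%:M
    & {subset acc A <= map fst (spec_end A)} ].

Definition measure (R : realType) (m : nat) (s : seq (R * 'M[R[i]]_m))
    (rho : 'M[R[i]]_m) : 'M[R[i]]_m :=
  \sum_(rP <- s) rP.2 *m rho *m rP.2.

Definition qfa_state (S : finType) (R : realType) (m : nat) (A : mon1qfa S R m)
    (x : seq S) : 'M[R[i]]_m :=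
  foldl (fun rho c => measure (spec A c) rho) (adj (pi0 A) *m pi0 A) x.

(* p_A(x) = sum_{r in F} tr(P_#(r) rho_n)  (a real number; we take its real part) *)
Definition accept_prob (S : finType) (R : realType) (m : nat) (A : mon1qfa S R m)
    (x : seq S) : R :=
  complex.Re (\sum_(rP <- spec_end A | rP.1 \in acc A) \tr (rP.2 *m qfa_state A x)).

Definition recognizes_isolated (S : finType) (R : realType) (m : nat)
    (A : mon1qfa S R m) (L : seq S -> Prop) (lambda : R) : Prop :=
  (forall x, L x <-> lambda < accept_prob A x) /\
  (exists delta : R, 0 < delta /\ forall x, delta <= `|accept_prob A x - lambda|).

Definition LMO (S : finType) (L : seq S -> Prop) : Prop :=
  exists (R : realType) (m : nat) (A : mon1qfa S R m) (lambda : R),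
    mon1qfa_wf A /\ recognizes_isolated A L lambda.

(* syntactic congruence; M(L) = S^* / synt L, with [u][v] = [uv], unit [nil] *)
Definition synt (S : finType) (L : seq S -> Prop) (u v : seq S) : Prop :=
  forall x y, L (x ++ u ++ y) <-> L (x ++ v ++ y).

Definition synt_finite (S : finType) (L : seq S -> Prop) : Prop :=
  exists s : seq (seq S), forall u, exists2 v, v \in s & synt L u v.

(* Green's relations in M(L):  [u] M = [v] M,  resp.  M [u] = M [v] *)
Definition synt_Rrel (S : finType) (L : seq S -> Prop) (u v : seq S) : Prop :=
  (exists x, synt L (u ++ x) v) /\ (exists y, synt L (v ++ y) u).
Definition synt_Lrel (S : finType) (L : seq S -> Prop) (u v : seq S) : Prop :=
  (exists x, synt L (x ++ u) v) /\ (exists y, synt L (y ++ v) u).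

Definition synt_idem (S : finType) (L : seq S -> Prop) (e : seq S) : Prop :=
  synt L (e ++ e) e.

(* M(L) in BG: finite, every R-class and every L-class has at most one idempotent *)
Definition synt_monoid_in_BG (S : finType) (L : seq S -> Prop) : Prop :=
  [/\ synt_finite L,
      (forall e f, synt_idem L e -> synt_idem L f -> synt_Rrel L e f -> synt L e f)
    & (forall e f, synt_idem L e -> synt_idem L f -> synt_Lrel L e f -> synt L e f)].

Definition synt_monoid_in_R (S : finType) (L : seq S -> Prop) : Prop :=
  synt_finite L /\ (forall u v, synt_Rrel L u v -> synt L u v).

From HB Require Import structures.
From mathcomp Require Import all_boot all_order all_algebra.
From mathcomp Require Import reals complex.
From mathcomp Require Import ring lra.
From Stdlib Require Import Classical.
Set Implicit Arguments. Unset Strict Implicit. Unset Printing Implicit Defensive.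
Import Order.TTheory GRing.Theory Num.Theory.
Local Open Scope ring_scope.

(* Every letter acts on density matrices by a projective measurement, which is an
   orthogonal projection for the real Frobenius inner product Re tr(A^* B).  So
   reading a word never increases the norm, and along a run of k letters the
   squared displacement is at most k times the loss of squared norm.  As the norm
   cannot decrease forever, iterating (xy)^n from any state eventually reaches a
   state almost fixed by x.  By isolation of the cut-point, words reaching close
   states lie on the same side of the cut-point after any right context.  If
   u R v, say v = ux and u = vy in M(L), then u ~ u(xy)^n and v ~ u(xy)^n x, whose
   states become arbitrarily close: hence u ~ v.  Dually, running the adjoint
   measurement backwards from the accepting observable gives L-triviality, hence
   the block group property.  Finiteness of M(L) is Rabin's argument: reachable
   states form a bounded set, which a finite grid cuts into cells of small
   diameter. *)

Section FrobeniusInnerProduct.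
Variables (R : realType) (m : nat).
Local Notation M := 'M[R[i]]_m.

Definition ipmx (A B : M) : R :=
  \sum_i \sum_j (complex.Re (A i j) * complex.Re (B i j)
                 + complex.Im (A i j) * complex.Im (B i j)).

Definition sqnorm (A : M) : R := ipmx A A.

Lemma ipmxC (A B : M) : ipmx A B = ipmx B A.
Proof.
by apply: eq_bigr => i _; apply: eq_bigr => j _; rewrite mulrC [X in _ + X]mulrC.
Qed.

Lemma ipmx_is_additive (A : M) : zmod_morphism (ipmx A).
Proof.
move=> B C; rewrite /ipmx -sumrB; apply: eq_bigr => i _; rewrite -sumrB.
by apply: eq_bigr => j _; rewrite !mxE !raddfD !raddfN /=; ring.
Qed.

HB.instance Definition _ (A : M) :=
  GRing.isZmodMorphism.Build M R (ipmx A) (ipmx_is_additive A).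

Lemma ipmxDl (A B C : M) : ipmx (B + C) A = ipmx B A + ipmx C A.
Proof. by rewrite ipmxC raddfD /= !(ipmxC A). Qed.

Lemma ipmxBl (A B C : M) : ipmx (B - C) A = ipmx B A - ipmx C A.
Proof. by rewrite ipmxC raddfB /= !(ipmxC A). Qed.

Lemma sqnorm_ge0 (A : M) : 0 <= sqnorm A.
Proof. by do 2![apply: sumr_ge0 => ? _]; apply: addr_ge0; exact: sqr_ge0. Qed.

Lemma sqnormD (A B : M) : sqnorm (A + B) = sqnorm A + sqnorm B + 2 * ipmx A B.
Proof. by rewrite /sqnorm ipmxDl !raddfD /= (ipmxC B A); ring. Qed.

Lemma sqnormN (A : M) : sqnorm (- A) = sqnorm A.
Proof. by rewrite /sqnorm raddfN /= ipmxC raddfN opprK. Qed.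

Lemma sqnormMn (A : M) k : sqnorm (A *+ k) = k%:R ^+ 2 * sqnorm A.
Proof.
by rewrite /sqnorm raddfMn /= ipmxC raddfMn /= -mulrnA mulnn -natrX mulr_natl.
Qed.

Lemma ipmx_le_sqnorm (A B : M) k :
  2 * k%:R * `|ipmx A B| <= sqnorm A + k%:R ^+ 2 * sqnorm B.
Proof.
have := sqnorm_ge0 (A + B *+ k); have := sqnorm_ge0 (A - B *+ k).
rewrite !sqnormD sqnormN !sqnormMn raddfN /= !raddfMn /=.
rewrite -(mulr_natr (ipmx A B)) -(mulr_natr (- ipmx A B)).
move: (ipmx A B) (sqnorm A) (sqnorm B) (k%:R : R) => p a b c h1 h2.
by case: (lerP 0 p) => h; [rewrite ger0_norm|rewrite ltr0_norm] => //; lra.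
Qed.

Lemma sqnormD_weighted (A B : M) k :
  k%:R * sqnorm (A + B) <= k.+1%:R * (sqnorm A + k%:R * sqnorm B).
Proof.
have := ipmx_le_sqnorm A B k; have := ler_norm (ipmx A B).
rewrite sqnormD -natr1; have := sqnorm_ge0 A; have := sqnorm_ge0 B.
have := ler0n R k; nra.
Qed.

Lemma adjM p q r (A : 'M[R[i]]_(p, q)) (B : 'M[R[i]]_(q, r)) :
  adj (A *m B) = adj B *m adj A.
Proof. by rewrite /adj map_mxM trmx_mul. Qed.

Lemma adjK p q (A : 'M[R[i]]_(p, q)) : adj (adj A) = A.
Proof. by apply/matrixP => i j; rewrite /adj !mxE conjcK. Qed.

Lemma ipmx_tr (A B : M) : ipmx A B = complex.Re (\tr (adj A *m B)).
Proof.
rewrite /mxtrace raddf_sum /ipmx exchange_big; apply: eq_bigr => i _.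
rewrite mxE raddf_sum; apply: eq_bigr => j _.
by rewrite /adj !mxE; case: (A j i) => a b; case: (B j i) => c d /=; ring.
Qed.

Lemma ipmx_sandwich (P A B : M) : adj P = P ->
  ipmx (P *m A *m P) B = ipmx A (P *m B *m P).
Proof.
by move=> saP; rewrite !ipmx_tr !adjM saP -!mulmxA mxtrace_mulC !mulmxA.
Qed.

Lemma ipmx_small (Q : M) (eps : R) : 0 < eps ->
  exists2 e, 0 < e & forall D, sqnorm D <= e -> `|ipmx Q D| < eps.
Proof.
move=> eps_gt0; have Q_ge0 := sqnorm_ge0 Q.
set k := Num.bound (sqnorm Q / eps).
have hk : sqnorm Q < k%:R * eps.
  by rewrite -ltr_pdivrMr // archi_boundP // divr_ge0 // ltW.
have k_gt0 : 0 < k%:R :> R by rewrite -(pmulr_lgt0 _ eps_gt0); lra.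
exists (eps / k%:R) => [|D hD]; first exact: divr_gt0.
have := ipmx_le_sqnorm Q D k.
have : k%:R ^+ 2 * sqnorm D <= k%:R * eps.
  by rewrite expr2 -mulrA ler_pM2l // mulrC -ler_pdivlMr.
rewrite -(ltr_pM2l (_ : 0 < 2 * k%:R)); last lra.
lra.
Qed.

Lemma sqnorm_entry_le (D : M) i j :
  complex.Re (D i j) ^+ 2 + complex.Im (D i j) ^+ 2 <= sqnorm D.
Proof.
have sq_ge0 i' j' : 0 <= complex.Re (D i' j') * complex.Re (D i' j')
                        + complex.Im (D i' j') * complex.Im (D i' j').
  by apply: addr_ge0; exact: sqr_ge0.
rewrite /sqnorm /ipmx (bigD1 i) //= (bigD1 j) //= !expr2 -addrA lerDl.
by apply: addr_ge0; do ?[apply: sumr_ge0 => ? _].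
Qed.
End FrobeniusInnerProduct.

Section ProjectiveMeasurement.
Variables (R : realType) (m : nat).
Local Notation M := 'M[R[i]]_m.

Definition projective_measurement (s : seq (R * M)) : Prop :=
  (forall rP, rP \in s -> orth_projector rP.2) /\
  pairwise (fun a b => (a.2 *m b.2 == 0) && (b.2 *m a.2 == 0)) s.

Lemma spectral_decomp_projective (O : M) s :
  spectral_decomp O s -> projective_measurement s.
Proof. by case=> _ proj orth _ _; split=> // rP /proj[]. Qed.

Lemma measure_is_additive s : zmod_morphism (@measure R m s).
Proof.
by move=> A B; rewrite /measure -sumrB; apply: eq_bigr => rP _; rewrite mulmxBr mulmxBl.
Qed.

HB.instance Definition _ s :=
  GRing.isZmodMorphism.Build M M (@measure R m s) (measure_is_additive s).

Lemma measure_cons a s (A : M) : measure (a :: s) A = a.2 *m A *m a.2 + measure s A.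
Proof. by rewrite /measure big_cons. Qed.

Lemma ipmx_measure s (A B : M) : (forall rP, rP \in s -> orth_projector rP.2) ->
  ipmx (measure s A) B = ipmx A (measure s B).
Proof.
elim: s => [|a s IH] proj; first by rewrite /measure !big_nil ipmxC !raddf0.
have [_ saP] := proj a (mem_head _ _).
rewrite !measure_cons ipmxDl raddfD /= ipmx_sandwich // IH // => rP rPs.
by apply: proj; rewrite inE rPs orbT.
Qed.

Lemma measure_id s (A : M) :
  projective_measurement s -> measure s (measure s A) = measure s A.
Proof.
elim: s A => [|a s IH] A [proj orth]; first by rewrite /measure !big_nil.
move: orth => /= /andP[/allP orth_a orth_s].
have [idP _] := proj a (mem_head _ _).
have s_proj : projective_measurement s.
  by split=> // rP rPs; apply: proj; rewrite inE rPs orbT.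
have P_meas_P X : a.2 *m measure s X *m a.2 = 0.
  rewrite /measure mulmx_sumr mulmx_suml big1_seq // => rP /orth_a /andP[/eqP h _].
  by rewrite !mulmxA h !mul0mx.
have meas_PXP X : measure s (a.2 *m X *m a.2) = 0.
  rewrite /measure big1_seq // => rP /orth_a /andP[_ /eqP h].
  by rewrite !mulmxA h !mul0mx.
rewrite !measure_cons !raddfD /= mulmxDl P_meas_P meas_PXP IH // addr0 add0r.
by rewrite -!mulmxA idP !mulmxA idP.
Qed.

(* [measure s] is a self-adjoint idempotent, i.e. an orthogonal projection. *)
Lemma sqnorm_measure s (A : M) : projective_measurement s ->
  sqnorm A = sqnorm (measure s A) + sqnorm (A - measure s A).
Proof.
move=> s_proj.
rewrite -[in LHS](subrK (measure s A) A) (sqnormD (A - measure s A)) ipmxBl.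
rewrite ipmx_measure ?measure_id ?subrr ?mulr0 ?addr0 1?addrC //.
by case: s_proj.
Qed.
End ProjectiveMeasurement.

Definition wpow (T : Type) (w : seq T) n : seq T := flatten (nseq n w).

Lemma wpowSr (T : Type) (w : seq T) n : wpow w n.+1 = wpow w n ++ w.
Proof.
elim: n => [|n IH]; first by rewrite /wpow /= cats0.
by rewrite -[wpow w n.+2]/(w ++ wpow w n.+1) {1}IH catA.
Qed.

Lemma rev_wpow (T : Type) (w : seq T) n : rev (wpow w n) = wpow (rev w) n.
Proof.
by elim: n => [|n IH] //; rewrite -[wpow w n.+1]/(w ++ wpow w n) rev_cat IH wpowSr.
Qed.

Lemma exists_small_decrement (R : archiRealFieldType) (f g : nat -> R) (C eps : R) :
  0 < eps -> 0 <= C -> (forall j, 0 <= f j) ->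
  (forall j, g j <= C * (f j - f j.+1)) -> exists j, g j <= eps.
Proof.
move=> eps_gt0 C_ge0 f_ge0 g_le.
apply/not_all_not_ex => big; have {}big j : eps < g j by rewrite ltNge; apply/negP/big.
have sum n : n%:R * eps <= C * (f 0%N - f n).
  elim: n => [|n IH]; first by rewrite mul0r subrr mulr0.
  have := g_le n; have := big n; rewrite -natr1; nra.
set n := Num.bound (C * f 0%N / eps).
have : C * f 0%N < n%:R * eps.
  by rewrite -ltr_pdivrMr // archi_boundP // divr_ge0 ?mulr_ge0 // ltW.
have := sum n; have := f_ge0 n; nra.
Qed.

Section Run.
Variables (R : realType) (m : nat) (S : Type) (meas : S -> seq (R * 'M[R[i]]_m)).
Hypothesis meas_proj : forall c, projective_measurement (meas c).
Local Notation M := 'M[R[i]]_m.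

Definition run (rho : M) (w : seq S) : M := foldl (fun r c => measure (meas c) r) rho w.

Lemma run_cat rho u v : run rho (u ++ v) = run (run rho u) v.
Proof. exact: foldl_cat. Qed.

Lemma runB (X Y : M) w : run (X - Y) w = run X w - run Y w.
Proof. by elim: w X Y => [|c w IH] X Y //=; rewrite raddfB IH. Qed.

Lemma sqnorm_run_le (D : M) w : sqnorm (run D w) <= sqnorm D.
Proof.
elim: w D => [|c w IH] D //=; apply: le_trans (IH _) _.
by rewrite [leRHS](sqnorm_measure D (meas_proj c)) lerDl sqnorm_ge0.
Qed.

Lemma ipmx_run (Q rho : M) w : ipmx Q (run rho w) = ipmx (run Q (rev w)) rho.
Proof.
elim: w Q rho => [|c w IH] Q rho //=.
by rewrite IH rev_cons -cats1 run_cat /= ipmx_measure //; case: (meas_proj c).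
Qed.

(* Cauchy-Schwarz along the path of projections: the squared displacement is at
   most the number of steps times the loss of squared norm. *)
Lemma sqnorm_run_sub (z : M) w :
  sqnorm (run z w - z) <= (size w)%:R * (sqnorm z - sqnorm (run z w)).
Proof.
elim: w z => [|c w IH] z; first by rewrite subrr mul0r /sqnorm raddf0.
set z' := measure (meas c) z; rewrite [run z _]/= -/z'.
have pyth := sqnorm_measure z (meas_proj c); rewrite -/z' in pyth.
have step : sqnorm (z' - z) = sqnorm z - sqnorm z'.
  by rewrite -opprB sqnormN pyth; lra.
case: w IH => [|c' w'] IH; first by rewrite step mul1r.
set w := c' :: w' in IH *; have K_gt0 : 0 < (size w)%:R :> R by rewrite ltr0n.
have weighted := sqnormD_weighted (run z' w - z') (z' - z) (size w).
rewrite (_ : run z' w - z = (run z' w - z') + (z' - z)); last by rewrite addrA subrK.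
rewrite -(ler_pM2l K_gt0) (_ : size (c :: w) = (size w).+1) //.
have := IH z'; rewrite -natr1 in weighted *.
rewrite step in weighted; nra.
Qed.

Lemma run_wpow_almost_fixed (z0 : M) x y (eps : R) : 0 < eps ->
  exists n, let z := run z0 (wpow (x ++ y) n) in sqnorm (run z x - z) <= eps.
Proof.
move=> eps_gt0; pose z j := run z0 (wpow (x ++ y) j).
apply: (@exists_small_decrement _ (fun j => sqnorm (z j))
          (fun j => sqnorm (run (z j) x - z j)) (size x)%:R) => // j.
  exact: sqnorm_ge0.
apply: le_trans (sqnorm_run_sub _ _) _; rewrite ler_wpM2l // lerD2l lerN2.
by rewrite /z wpowSr !run_cat sqnorm_run_le.
Qed.
End Run.

Lemma real_quantize (R : archiRealFieldType) (G eta : R) : 0 < eta ->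
  exists K (f : R -> 'I_K),
    forall x y, `|x| <= G -> `|y| <= G -> f x = f y -> `|x - y| < eta.
Proof.
move=> eta_gt0; pose cell x := Num.truncn ((x + G) / eta).
exists (Num.truncn (2 * G / eta)).+1, (fun x => inord (cell x)) => x y.
have cell_ok z : `|z| <= G ->
    0 <= (z + G) / eta /\ (cell z < (Num.truncn (2 * G / eta)).+1)%N.
  rewrite ler_norml => /andP[z_ge z_le]; have z_ge0 : 0 <= (z + G) / eta.
    by apply: divr_ge0; lra.
  by split; rewrite // ltnS le_truncn // ler_pM2r ?invr_gt0 //; lra.
move=> /cell_ok[x_ge0 x_lt] /cell_ok[y_ge0 y_lt] /(congr1 val) /=.
rewrite !inordK // => same_cell.
have /andP[x1 x2] := truncn_itv x_ge0; have /andP[y1 y2] := truncn_itv y_ge0.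
rewrite -/(cell x) same_cell in x1 x2; rewrite -/(cell y) in y1 y2.
rewrite -natr1 in x2 y2.
rewrite ler_pdivlMr // in x1; rewrite ler_pdivlMr // in y1.
rewrite ltr_pdivrMr // in x2; rewrite ltr_pdivrMr // in y2.
rewrite ltr_norml; apply/andP; split; nra.
Qed.

Lemma sqnorm_quantize (R : realType) m (G e : R) : 0 < e ->
  exists (T : finType) (f : 'M[R[i]]_m -> T), forall D D',
    sqnorm D <= G -> sqnorm D' <= G -> f D = f D' -> sqnorm (D - D') <= e.
Proof.
move=> e_gt0; pose cm := (m * m)%:R : R; have cm_ge0 : 0 <= cm by rewrite ler0n.
(* [eta < 1] and [2 cm eta <= e]: the [m * m] entries of [D - D'], each of
   squared modulus below [2 eta^2], then add up to at most [e]. *)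
pose eta := e / (2 * cm + e + 1).
have eta_def : eta * (2 * cm + e + 1) = e by rewrite divfK // gt_eqF //; lra.
have eta_gt0 : 0 < eta by rewrite divr_gt0 //; lra.
have [K [f f_close]] := real_quantize (G + 1) eta_gt0.
exists {ffun 'I_m * 'I_m -> 'I_K * 'I_K}.
exists (fun D => [ffun ij =>
  (f (complex.Re (D ij.1 ij.2)), f (complex.Im (D ij.1 ij.2)))]).
move=> D D' DG D'G /ffunP same_key.
have entry_small (X : 'M[R[i]]_m) i j :
    sqnorm X <= G -> `|complex.Re (X i j)| <= G + 1 /\ `|complex.Im (X i j)| <= G + 1.
  move=> XG; have := le_trans (sqnorm_entry_le X i j) XG.
  move: (complex.Re _) (complex.Im _) => a b; rewrite !expr2 => ab.
  have := sqr_ge0 a; have := sqr_ge0 b.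
  by rewrite !ler_norml; split; apply/andP; split; nra.
have entry_close i j : complex.Re ((D - D') i j) * complex.Re ((D - D') i j)
    + complex.Im ((D - D') i j) * complex.Im ((D - D') i j) <= 2 * eta ^+ 2.
  have [e1 e2] := entry_small D i j DG; have [e1' e2'] := entry_small D' i j D'G.
  have := same_key (i, j); rewrite !ffunE => -[/f_close re /f_close im].
  move: (re e1 e1') (im e2 e2'); rewrite !mxE !raddfD !raddfN /= !ltr_norml.
  by move=> /andP[? ?] /andP[? ?]; nra.
apply: le_trans (_ : \sum_(i < m) \sum_(j < m) 2 * eta ^+ 2 <= _).
  by do 2![apply: ler_sum => ? _]; exact: entry_close.
rewrite !sumr_const !card_ord -mulrnA -mulr_natr -/cm; nra.
Qed.

Lemma fiber_representatives (X : eqType) (T : finType) (f : X -> T) :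
  exists s : seq X, forall x, exists2 y, y \in s & f y = f x.
Proof.
suff [s sP] : exists s : seq X, forall t, t \in enum T ->
    (exists x, f x = t) -> exists2 y, y \in s & f y = t.
  by exists s => x; apply: sP; [rewrite mem_enum | exists x].
elim: (enum T) => [|t ts [s sP]]; first by exists [::].
case: (classic (exists x, f x = t)) => [[x0 fx0]|no_x].
  exists (x0 :: s) => t'; rewrite inE => /orP[/eqP -> _|t'ts /(sP _ t'ts)[y ys fy]].
    by exists x0; rewrite ?mem_head.
  by exists y; rewrite // inE ys orbT.
exists s => t'; rewrite inE => /orP[/eqP -> fib|t'ts]; [by case: no_x | exact: sP].
Qed.

Section SyntacticCongruence.
Variables (S : finType) (L : seq S -> Prop).

Lemma synt_sym u v : synt L u v -> synt L v u.
Proof. by move=> uv x y; split=> /(uv x y). Qed.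

Lemma synt_trans u v w : synt L u v -> synt L v w -> synt L u w.
Proof. by move=> uv vw x y; rewrite (uv x y) (vw x y). Qed.

Lemma synt_catr u v w : synt L u v -> synt L (u ++ w) (v ++ w).
Proof. by move=> uv x y; have := uv x (w ++ y); rewrite -!catA. Qed.

Lemma synt_catl u v w : synt L u v -> synt L (w ++ u) (w ++ v).
Proof. by move=> uv x y; have := uv (x ++ w) y; rewrite -!catA. Qed.

Lemma synt_wpowr u w n : synt L (u ++ w) u -> synt L (u ++ wpow w n) u.
Proof.
move=> uw; elim: n => [|n IH]; first by rewrite cats0.
by rewrite wpowSr catA; apply: synt_trans (synt_catr _ IH) uw.
Qed.

Lemma synt_wpowl u w n : synt L (w ++ u) u -> synt L (wpow w n ++ u) u.
Proof.
move=> wu; elim: n => [|n IH] //.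
by rewrite -[wpow w n.+1]/(w ++ wpow w n) -catA; apply: synt_trans (synt_catl _ IH) wu.
Qed.
End SyntacticCongruence.

Section IsolatedCutPoint.
Variables (S : finType) (R : realType) (m : nat) (A : mon1qfa S R m).
Variables (L : seq S -> Prop) (lambda delta : R).
Hypothesis A_proj : forall c, projective_measurement (spec A c).
Hypothesis L_accept : forall x, L x <-> lambda < accept_prob A x.
Hypothesis delta_gt0 : 0 < delta.
Hypothesis isolated : forall x, delta <= `|accept_prob A x - lambda|.
Local Notation M := 'M[R[i]]_m.
Local Notation run := (run (spec A)).

Definition init_state : M := adj (pi0 A) *m pi0 A.
Definition accept_obs : M := adj (\sum_(rP <- spec_end A | rP.1 \in acc A) rP.2).

Lemma accept_prob_ipmx x : accept_prob A x = ipmx accept_obs (run init_state x).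
Proof. by rewrite /accept_prob ipmx_tr /accept_obs adjK -linear_sum /= -mulmx_suml. Qed.

Lemma L_iff_of_accept_close u v :
  `|accept_prob A u - accept_prob A v| < 2 * delta -> (L u <-> L v).
Proof.
have side x : lambda + delta <= accept_prob A x \/ accept_prob A x <= lambda - delta.
  by move: (isolated x); rewrite ler_normr => /orP[] h; [left | right]; lra.
rewrite ltr_norml => /andP[lo hi]; rewrite !L_accept.
by case: (side u) => pu; case: (side v) => pv; split=> ?; lra.
Qed.

Lemma accept_close_of_state_close eps : 0 < eps -> exists2 e, 0 < e & forall s t b,
  sqnorm (run init_state s - run init_state t) <= e ->
  `|accept_prob A (s ++ b) - accept_prob A (t ++ b)| < eps.
Proof.
move=> /(ipmx_small accept_obs)[e e_gt0 small].
exists e => // s t b st_close; rewrite !accept_prob_ipmx !run_cat -raddfB /= -runB //.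
by apply: small; apply: le_trans st_close; apply: sqnorm_run_le.
Qed.

Lemma accept_close_of_costate_close eps : 0 < eps -> exists2 e, 0 < e & forall a s t,
  sqnorm (run accept_obs (rev s) - run accept_obs (rev t)) <= e ->
  `|accept_prob A (a ++ s) - accept_prob A (a ++ t)| < eps.
Proof.
move=> /(ipmx_small init_state)[e e_gt0 small].
exists e => // a s t st_close.
rewrite !accept_prob_ipmx !ipmx_run // !rev_cat !run_cat -ipmxBl -runB // ipmxC.
by apply: small; apply: le_trans st_close; apply: sqnorm_run_le.
Qed.

Lemma synt_of_Rrel u v : synt_Rrel L u v -> synt L u v.
Proof.
move=> [[x ux_v] [y vy_u]] a b.
have uxy_u : synt L (u ++ (x ++ y)) u.
  by rewrite catA; apply: synt_trans (synt_catr _ ux_v) vy_u.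
have [e e_gt0 close] := accept_close_of_state_close (mulr_gt0 (ltr0Sn _ 1) delta_gt0).
have [n fixed] := run_wpow_almost_fixed A_proj (run (run init_state a) u) x y e_gt0.
set W := wpow (x ++ y) n in fixed.
have u_W : synt L u (u ++ W) := synt_sym (synt_wpowr n uxy_u).
have v_W : synt L v (u ++ W ++ x).
  by rewrite catA; apply: synt_trans (synt_sym ux_v) (synt_catr _ u_W).
rewrite (u_W a b) (v_W a b); apply: L_iff_of_accept_close; rewrite !catA.
have := close ((a ++ u) ++ W) (((a ++ u) ++ W) ++ x) b.
by rewrite !run_cat -sqnormN opprB => /(_ fixed).
Qed.

Lemma synt_of_Lrel u v : synt_Lrel L u v -> synt L u v.
Proof.
move=> [[x xu_v] [y yv_u]] a b.
have xyv_v : synt L ((x ++ y) ++ v) v.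
  by rewrite -catA; apply: synt_trans (synt_catl _ yv_u) xu_v.
have [e e_gt0 close] := accept_close_of_costate_close (mulr_gt0 (ltr0Sn _ 1) delta_gt0).
have [n fixed] := run_wpow_almost_fixed A_proj
  (run accept_obs (rev (v ++ b))) (rev y) (rev x) e_gt0.
set W := wpow (x ++ y) n.
have v_W : synt L v (W ++ v) := synt_sym (synt_wpowl n xyv_v).
have u_W : synt L u (y ++ W ++ v) := synt_trans (synt_sym yv_u) (synt_catl y v_W).
rewrite (u_W a b) (v_W a b); apply: L_iff_of_accept_close.
have := close a ((y ++ W ++ v) ++ b) ((W ++ v) ++ b).
by move: fixed; rewrite -rev_cat -rev_wpow -/W !rev_cat !run_cat => fixed /(_ fixed).
Qed.

Lemma synt_finite_of_isolated : synt_finite L.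
Proof.
have third_gt0 : 0 < 2 * delta / 3 by rewrite !divr_gt0 ?mulr_gt0.
have [e e_gt0 close] := accept_close_of_state_close third_gt0.
have [T [q q_close]] := sqnorm_quantize m (sqnorm init_state) e_gt0.
pose key w := q (run init_state w).
have state_close s t :
    key s = key t -> sqnorm (run init_state s - run init_state t) <= e.
  by apply: q_close; apply: sqnorm_run_le.
have state_close_cat s t w : key s = key t ->
    sqnorm (run init_state (s ++ w) - run init_state (t ++ w)) <= e.
  move=> /state_close st; rewrite !run_cat -runB //.
  exact: le_trans (sqnorm_run_le A_proj _ _) st.
have [reps reps_cover] := fiber_representatives key.
(* Words [u] and [v] are identified when, after each representative left
   context, they lead to the same cell. *)
have [classes classes_cover] := fiber_representatives
  (fun u => [ffun i : 'I_(size reps) => key (nth [::] reps i ++ u)]).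
exists classes => u; have [v v_in same_u] := classes_cover u; exists v => // a b.
have [a' a'_in same_a] := reps_cover a.
have a'_idx : (index a' reps < size reps)%N by rewrite index_mem.
have /ffunP/(_ (Ordinal a'_idx)) := same_u.
rewrite !ffunE /= nth_index // => same_a'.
have t1 := close _ _ b (state_close_cat _ _ u (esym same_a)).
have t2 := close _ _ b (state_close _ _ (esym same_a')).
have t3 := close _ _ b (state_close_cat _ _ v same_a).
apply: L_iff_of_accept_close; rewrite !catA.
have := ler_distD (accept_prob A ((a' ++ u) ++ b)) (accept_prob A ((a ++ u) ++ b))
  (accept_prob A ((a ++ v) ++ b)).
have := ler_distD (accept_prob A ((a' ++ v) ++ b)) (accept_prob A ((a' ++ u) ++ b))
  (accept_prob A ((a ++ v) ++ b)).
lra.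
Qed.
End IsolatedCutPoint.

Theorem theorem3 (S : finType) (L : seq S -> Prop) :
  LMO L -> synt_monoid_in_BG L /\ synt_monoid_in_R L.
Proof.
move=> [R [m [A [lambda [[spec_ok _ _ _] [L_accept [delta [delta_gt0 isolated]]]]]]]].
have A_proj c : projective_measurement (spec A c).
  by have [_ /spectral_decomp_projective] := spec_ok c.
have fin := synt_finite_of_isolated A_proj L_accept delta_gt0 isolated.
have R_trivial := synt_of_Rrel A_proj L_accept delta_gt0 isolated.
have L_trivial := synt_of_Lrel A_proj L_accept delta_gt0 isolated.
by split; [split=> // e f _ _; [exact: R_trivial | exact: L_trivial] | split].
Qed.
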